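(* Let $\psi$ be a finite conjunction of linear constraints, each of the form $\left(\sum_i d_i x_i\right)\odot n$ with integers $d_i,n$, database objects $x_i$, and $\odot\in\{=,<,\le\}$, and let $D$ be a database satisfying $\psi$. For each site $k\in\{1,\dots,K\}$ form the local treaty template $\varphi_{\Gamma_k}$ by replacing each clause $\left(\sum_i d_i x_i\right)\odot n$ of $\psi$ by $\left(\sum_{\mathit{Loc}(x_i)=k} d_i x_i + c\right)\odot n$, where $c$ is a fresh integer-valued configuration variable (distinct for each clause and each site). Then there exists an assignment of integer values to all configuration variables such that the resulting formulas $\varphi_{\Gamma_1},\dots,\varphi_{\Gamma_K}$ (which mention only objects located at the respective site) satisfy: (H1) for every database $D'$, $\bigwedge_{1\le k\le K}\varphi_{\Gamma_k}(D')$ implies $\psi(D')$; and (H2) $\varphi_{\Gamma_k}(D)$ holds for every $k=1,\dots,K$.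
   Context: A database is a map from a countably infinite set of objects to the integers with finite support; objects are assigned to sites $\{1,\dots,K\}$ by $\mathit{Loc}$, each object residing at exactly one site. A formula is evaluated on a database by substituting each object's value for the object. *)

From mathcomp Require Import all_boot all_order all_algebra.
Set Implicit Arguments. Unset Strict Implicit. Unset Printing Implicit Defensive.
Import Order.TTheory GRing.Theory Num.Theory.
Local Open Scope ring_scope.

Definition obj := nat.

Definition database := obj -> int.
Definition fin_supp (D : database) : Prop :=
  exists s : seq obj, forall x, x \notin s -> D x = 0.

Inductive cmp := CEq | CLt | CLe.
Definition eval_cmp (o : cmp) (a b : int) : bool :=
  match o with CEq => a == b | CLt => a < b | CLe => a <= b end.

Record constraint := Constraint {
  terms : seq (int * obj);
  op : cmp;
  rhs : int }.

Definition lhs_val (D : database) (t : seq (int * obj)) : int :=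
  \sum_(p <- t) p.1 * D p.2.

Definition sat_constraint (D : database) (c : constraint) : bool :=
  eval_cmp (op c) (lhs_val D (terms c)) (rhs c).

Definition sat (D : database) (psi : seq constraint) : Prop :=
  forall j, (j < size psi)%N -> sat_constraint D (nth (Constraint [::] CEq 0) psi j).

(* Local treaty template for site k: clause j of psi becomes
   (sum_{Loc x_i = k} d_i x_i + c) op n, with configuration variable
   c = conf k j (distinct per clause and site). *)
Definition local_treaty (K : nat) (Loc : obj -> 'I_K) (psi : seq constraint)
    (conf : 'I_K -> nat -> int) (k : 'I_K) (D : database) : Prop :=
  forall j, (j < size psi)%N ->
    let c := nth (Constraint [::] CEq 0) psi j in
    eval_cmp (op c)
      (lhs_val D [seq p <- terms c | Loc p.2 == k] + conf k j) (rhs c).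

(** Split each clause [(sum_i d_i x_i) op n] by sites: the value on [D'] is the
    value on [D] plus the sum over sites [k] of the local changes
    [delta_k = L_k(D') - L_k(D)].  One distinguished site [k0] keeps the whole
    slack of [D]: its treaty reads [L(D) + delta_k0 op n].  Every other site
    is only allowed to move towards satisfaction ([delta_k <= 0], or
    [delta_k = 0] for an equality), which is the treaty
    [L_k(D') + (n - L_k(D) - [op is <]) op n].  Together the treaties force
    [L(D') op n], and [D] satisfies all of them because it satisfies [psi]. *)

From mathcomp Require Import all_boot all_order all_algebra.
From mathcomp Require Import zify ring.
Set Implicit Arguments. Unset Strict Implicit. Unset Printing Implicit Defensive.
Import Order.TTheory GRing.Theory Num.Theory.
Local Open Scope ring_scope.

Definition strict (o : cmp) : int := if o is CLt then 1 else 0.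

(* The changes [s] of a left-hand side that can never break [_ op n]. *)
Definition cmp_slack (o : cmp) (s : int) : bool :=
  if o is CEq then s == 0 else s <= 0.

Lemma eval_cmp_tight (o : cmp) (d n : int) :
  eval_cmp o (d + (n - strict o)) n = cmp_slack o d.
Proof. by case: o => /=; apply/idP/idP; lia. Qed.

Lemma eval_cmp_addr_slack (o : cmp) (a s n : int) :
  cmp_slack o s -> eval_cmp o a n -> eval_cmp o (a + s) n.
Proof. by case: o => /=; lia. Qed.

Lemma cmp_slack_sum (o : cmp) (I : Type) (r : seq I) (P : pred I) (F : I -> int) :
  (forall i, P i -> cmp_slack o (F i)) -> cmp_slack o (\sum_(i <- r | P i) F i).
Proof.
move=> hF; apply: (big_ind (cmp_slack o)) => //; first by case: (o).
by case: (o) => /= a b; lia.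
Qed.

Section SlackTransfer.

Variables (I : finType) (i0 : I) (o : cmp) (n : int) (x x' : I -> int).

Definition slack_budget (i : I) : int :=
  if i == i0 then \sum_j x j else n - strict o.

Lemma eval_cmp_budget_sum :
  (forall i, eval_cmp o (x' i + (slack_budget i - x i)) n) ->
  eval_cmp o (\sum_i x' i) n.
Proof.
move=> hloc.
have -> : \sum_i x' i = x' i0 + (\sum_i x i - x i0) + \sum_(i | i != i0) (x' i - x i).
  by rewrite sumrB (bigD1 (F := x') i0) // (bigD1 (F := x) i0) //=; ring.
apply: eval_cmp_addr_slack; last by have := hloc i0; rewrite /slack_budget eqxx.
apply: cmp_slack_sum => i hi; rewrite -(eval_cmp_tight _ _ n).
by have := hloc i; rewrite /slack_budget (negbTE hi) addrCA addrC.
Qed.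

Lemma eval_cmp_budget :
  eval_cmp o (\sum_i x i) n -> forall i, eval_cmp o (x i + (slack_budget i - x i)) n.
Proof.
move=> hsum i; rewrite addrC subrK /slack_budget.
by case: eqP => // _; rewrite -[_ - _]add0r eval_cmp_tight; case: o.
Qed.

End SlackTransfer.

Definition local_lhs (K : nat) (Loc : obj -> 'I_K) (D : database)
    (t : seq (int * obj)) (k : 'I_K) : int :=
  lhs_val D [seq p <- t | Loc p.2 == k].

Lemma lhs_val_by_site (K : nat) (Loc : obj -> 'I_K) (D : database) (t : seq (int * obj)) :
  lhs_val D t = \sum_k local_lhs Loc D t k.
Proof.
rewrite /lhs_val (eq_bigr (fun p => \sum_(k | Loc p.2 == k) p.1 * D p.2)).
  by rewrite (exchange_big_dep predT) //=; apply: eq_bigr => k _; rewrite /local_lhs /lhs_val big_filter.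
by move=> p _; rewrite (big_pred1 (Loc p.2)) // => k; rewrite eq_sym.
Qed.

Definition slack_conf (K : nat) (Loc : obj -> 'I_K) (psi : seq constraint)
    (D : database) (k0 : 'I_K) (k : 'I_K) (j : nat) : int :=
  let c := nth (Constraint [::] CEq 0) psi j in
  slack_budget k0 (op c) (rhs c) (local_lhs Loc D (terms c)) k
    - local_lhs Loc D (terms c) k.

Theorem theorem4p2 (K : nat) (Loc : obj -> 'I_K) (psi : seq constraint)
    (D : database) (hD : fin_supp D) (hsat : sat D psi) :
  exists conf : 'I_K -> nat -> int,
    (forall D' : database, fin_supp D' ->
       (forall k : 'I_K, local_treaty Loc psi conf k D') -> sat D' psi) /\
    (forall k : 'I_K, local_treaty Loc psi conf k D).
Proof.
exists (slack_conf Loc psi D (Loc 0%N)); split.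
- move=> D' _ htreaty j hj; rewrite /sat_constraint (lhs_val_by_site Loc).
  by apply: (eval_cmp_budget_sum (i0 := Loc 0%N)) => k; apply: htreaty.
- move=> k j hj; have := hsat j hj.
  by rewrite /sat_constraint (lhs_val_by_site Loc) => /eval_cmp_budget; apply.
Qed.
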